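(* Let $(N,m)$ be a marked P/T net, let $\mathcal U[N,m]=(O,m_0)$ be its unfolding with folding morphism $(f_S,f_T)$, and let $\overleftarrow{(N,m)}=(\overleftarrow O,m_0)$ be its reversible version. Then for every marking $m'$ of $N$: $(N,m)\to^*(N,m')$ if and only if there exists a marking $m''$ of $O$ with $(\overleftarrow O,m_0)\to^*(\overleftarrow O,m'')$ (any finite sequence of forward and backward firings) and $m'=f_S(m'')$.
   Context: A P/T net $N=(S_N,T_N,{}^\bullet\_,\_^\bullet)$ has disjoint sets of places and transitions and functions assigning to each transition a nonempty preset ${}^\bullet\mathsf t$ and nonempty postset $\mathsf t^\bullet$, both multisets over $S_N$. Markings are multisets over $S_N$; firing rule: if ${}^\bullet\mathsf t=m_1$, $\mathsf t^\bullet=m_2$ then $(N,m_1\oplus m_3)\xrightarrow{\mathsf t}(N,m_2\oplus m_3)$; $\to^*$ is a finite sequence of firings. Causality $\preceq$, conflict $\#$ and concurrency $co$ on places and transitions of a net: $\prec=\{(a,\mathsf t)\mid a\in{}^\bullet\mathsf t\}\cup\{(\mathsf t,a)\mid a\in\mathsf t^\bullet\}$, $\preceq$ its reflexive-transitive closure; $x\#y$ iff there are transitions $\mathsf t_1\preceq x$, $\mathsf t_2\preceq y$, $\mathsf t_1\ne\mathsf t_2$, with ${}^\bullet\mathsf t_1\cap{}^\bullet\mathsf t_2\ne\emptyset$; $x\ co\ y$ iff $x\ne y$, $x\not\preceq y$, $y\not\preceq x$, not $x\#y$; a set $X$ satisfies $CO(X)$ iff its elements are pairwise $co$ and only finitely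 many transitions $\mathsf t$ satisfy $\mathsf t\preceq x$ for some $x\in X$. The unfolding $\mathcal U[N,m]=(S,T,{}^\bullet\_,\_^\bullet)$ is the least net such that: (i) if $m(a)=n$ then the places $a(\emptyset,i)$, $1\le i\le n$, are in $S$; (ii) if $H=\{a_j(h_j,i_j)\mid j\in J\}\subseteq S$ with $CO(H)$, $\mathsf t\in T_N$ and ${}^\bullet\mathsf t=\bigoplus_{j\in J}a_j$, then $\mathsf t(H)\in T$ with preset $H$; (iii) if $x=\mathsf t(H)\in T$ then the places $a(\{x\},i)$ for $1\le i\le\mathsf t^\bullet(a)$ are in $S$ and form the postset of $x$. Its initial marking $m_0$ is the set of places $a(\emptyset,i)$; it is an occurrence net. The folding morphism is $f_S(a(h,i))=a$, $f_T(\mathsf t(H))=\mathsf t$, extended to multisets. The reversible version $\overleftarrow O$ of $O$ has the same places, transitions $T_O\cup\{\underline{\mathsf t}\mid\mathsf t\in T_O\}$, forward transitions keep pre/postsets and ${}^\bullet\underline{\mathsf t}=\mathsf t^\bullet$, $\underline{\mathsf t}^\bullet={}^\bullet\mathsf t$; firings of transitions of $T_O$ are forward, of reverse transitions backward. The reversible version of $(N,m)$ is $\overleftarrow{\mathcal U[N,m]}$. *)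

From HB Require Import structures.
From mathcomp Require Import all_boot.
From Stdlib Require Import Relations.Relation_Operators.

Set Implicit Arguments.
Unset Strict Implicit.
Unset Printing Implicit Defensive.

(** * Multisets
    A (finite) multiset over an eqType A is represented by a [seq A];
    two multisets are equal iff the sequences are permutations of each
    other ([perm_eq]); [m1 ++ m2] is the multiset sum [m1 (+) m2] and
    [count_mem a m] is the multiplicity [m(a)]. *)

Record ptnet (S T : Type) := PTNet { pre : T -> seq S ; post : T -> seq S }.

Definition fire (S T : eqType) (N : ptnet S T) (m1 m2 : seq S) : Prop :=
  exists (t : T) (m3 : seq S),
    perm_eq m1 (pre N t ++ m3) /\ perm_eq m2 (post N t ++ m3).

Definition reach (A : eqType) (step : seq A -> seq A -> Prop) (m m' : seq A) : Prop :=
  exists m1, clos_refl_trans (seq A) step m m1 /\ perm_eq m1 m'.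

(** Its places a(h,i) and transitions t(H) are concrete syntactic terms,
    encoded as generic trees (so they form a choiceType):
      a(h,i)  ~  Node 0 [:: Leaf a; h; Leaf i]    (h = Node 2 [::] for the empty history)
      t(H)    ~  Node 1 (Leaf t :: H)
    A set H of places is represented by the canonical duplicate-free list
    chosen (by the choice operator, which only depends on the extent of the
    predicate) among all enumerations of H, so that each set H yields a
    single transition t(H). *)
Section Unfolding.
Variables (S T : choiceType) (N : ptnet S T) (m : seq S).

Definition code := GenTree.tree (S + T + nat)%type.

Definition mkP (a : S) (h : option code) (i : nat) : code :=
  GenTree.Node 0 [:: GenTree.Leaf (inl (inl a));
                     (if h is Some x then x else GenTree.Node 2 [::]);
                     GenTree.Leaf (inr i)].

Definition mkT (t : T) (H : seq code) : code :=
  GenTree.Node 1 (GenTree.Leaf (inl (inr t)) :: H).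

Definition fS (x : code) : option S :=
  match x with
  | GenTree.Node 0 [:: GenTree.Leaf (inl (inl a)); _; GenTree.Leaf (inr _)] => Some a
  | _ => None
  end.

Definition decT (x : code) : option (T * seq code) :=
  match x with
  | GenTree.Node 1 (GenTree.Leaf (inl (inr t)) :: H) => Some (t, H)
  | _ => None
  end.

Definition is_trans_code (x : code) : bool := decT x != None.

Definition upre (x : code) : seq code :=
  if decT x is Some (_, H) then H else [::].

Definition places_of (ms : seq S) (h : option code) : seq code :=
  flatten [seq [seq mkP a h i | i <- iota 1 (count_mem a ms)] | a <- undup ms].

Definition upost (x : code) : seq code :=
  if decT x is Some (t, _) then places_of (post N t) (Some x) else [::].

Definition m0 : seq code := places_of m None.

Definition uprec (y x : code) : Prop := y \in upre x \/ x \in upost y.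
Definition ucaus : code -> code -> Prop := clos_refl_trans code uprec.

Definition uconfl (x y : code) : Prop :=
  exists t1 t2, is_trans_code t1 /\ is_trans_code t2 /\
    ucaus t1 x /\ ucaus t2 y /\ t1 <> t2 /\
    exists p, p \in upre t1 /\ p \in upre t2.

Definition uco (x y : code) : Prop :=
  x <> y /\ ~ ucaus x y /\ ~ ucaus y x /\ ~ uconfl x y.

Definition CO (X : seq code) : Prop :=
  (forall x y, x \in X -> y \in X -> x <> y -> uco x y) /\
  (exists l : seq code, forall t x, x \in X -> is_trans_code t -> ucaus t x -> t \in l).

Definition canonical (H : seq code) : Prop :=
  uniq H /\ H = choose [pred l : seq code | perm_eq l H] H.

Inductive uplace : code -> Prop :=
| uplace_init : forall p, p \in m0 -> uplace p
| uplace_post : forall x p, utrans x -> p \in upost x -> uplace p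
with utrans : code -> Prop :=
| utrans_intro : forall (t : T) (H : seq code),
    canonical H ->
    (forall p, p \in H -> uplace p) ->
    CO H ->
    perm_eq (pre N t) (pmap fS H) ->
    utrans (mkT t H).

Definition rev_fire (m1 m2 : seq code) : Prop :=
  exists x, utrans x /\ exists m3 : seq code,
    (perm_eq m1 (upre x ++ m3) /\ perm_eq m2 (upost x ++ m3)) \/
    (perm_eq m1 (upost x ++ m3) /\ perm_eq m2 (upre x ++ m3)).

End Unfolding.

(** Forward direction: a firing sequence of N is lifted to O by maintaining a
    configuration C of O together with its cut M (the marking reached by firing C),
    whose image under f_S is the current marking of N.  Every place of the cut is
    initial or produced by C and unconsumed, so the preset of any N-transition
    enabled at f_S(M) can be matched by a subset H of M; the places of a cut are
    pairwise concurrent, hence t(H) is a transition of the unfolding and firing it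
    extends the configuration.
    Backward direction: in the occurrence net O each place is produced by at most
    one transition and initial places by none, so a backward firing of x after a
    forward history either undoes the last forward firing (if it was x) or commutes
    with it.  Hence every marking reachable in the reversible version is reachable
    by forward firings only, and forward firings of O fold onto firings of N. *)

From HB Require Import structures.
From mathcomp Require Import all_boot.
From Stdlib Require Import Relations.Relation_Operators Relations.Operators_Properties.

Set Implicit Arguments.
Unset Strict Implicit.
Unset Printing Implicit Defensive.

Lemma perm_pmap_cat_split (A B : eqType) (f : A -> option B) (M : seq A) (a b : seq B) :
  perm_eq (pmap f M) (a ++ b) ->
  exists H R, perm_eq M (H ++ R) /\ perm_eq (pmap f H) a /\ perm_eq (pmap f R) b.
Proof.
elim: a M => [|x a IH] M /= hM; first by exists [::], M.
have : x \in pmap f M by rewrite (perm_mem hM) inE eqxx.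
rewrite mem_pmap => /mapP [y yM fy].
have remM := perm_to_rem yM.
have : perm_eq (pmap f (rem y M)) (a ++ b).
  have := perm_pmap f remM; rewrite /= -fy /= perm_sym => h.
  by have := perm_trans h hM; rewrite perm_cons.
case/IH => [H [R [h1 [h2 h3]]]].
exists (y :: H), R; split; last split => //.
  by apply: (perm_trans remM); rewrite /= perm_cons.
by rewrite /= -fy /= perm_cons.
Qed.

Lemma perm_cat_disjoint (A : eqType) (a b c d : seq A) :
  (forall x, x \in a -> x \in c -> False) ->
  perm_eq (a ++ b) (c ++ d) ->
  exists e, perm_eq b (c ++ e) /\ perm_eq d (a ++ e).
Proof.
elim: a d => [|x a IH] d /= disj hp; first by exists d.
have xd : x \in d.
  have : x \in c ++ d by rewrite -(perm_mem hp) inE eqxx.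
  by rewrite mem_cat => /orP [xc|//]; case: (disj x) => //; rewrite inE eqxx.
have remd := perm_to_rem xd.
have : perm_eq (a ++ b) (c ++ rem x d).
  rewrite -(perm_cons x); apply: (perm_trans hp).
  by rewrite -[x :: _]/([:: x] ++ c ++ rem x d) perm_sym perm_catCA perm_cat2l perm_sym.
case/IH => [y ya yc|e [h1 h2]]; first by apply: (disj y) => //; rewrite inE ya orbT.
by exists e; split => //; apply: (perm_trans remd); rewrite /= perm_cons.
Qed.

Section Unfolding.
Variables (S T : choiceType) (N : ptnet S T) (m : seq S).
Local Notation code := (code S T).
Local Notation mkP := (@mkP S T).
Local Notation mkT := (@mkT S T).
Local Notation decT := (@decT S T).
Local Notation fS := (@fS S T).
Local Notation places_of := (@places_of S T).
Local Notation upre := (@upre S T).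
Local Notation upost := (upost N).
Local Notation m0 := (m0 T m).
Local Notation utrans := (utrans N m).
Local Notation rev_fire := (rev_fire N m).

Lemma decT_someK y t H : decT y = Some (t, H) -> y = mkT t H.
Proof.
case: y => [?|n l] //=; case: n => [|[|?]] //.
by case: l => [|[[[?|?]|?]|??] l] //= [-> ->].
Qed.

Lemma mkP_inj a b h1 h2 i j : mkP a h1 i = mkP b h2 j ->
  [/\ a = b, i = j &
   (if h1 is Some x then x else GenTree.Node 2 [::]) =
   (if h2 is Some x then x else GenTree.Node 2 [::])].
Proof. by case. Qed.

Lemma mem_places_of ms h x : x \in places_of ms h -> exists a i, x = mkP a h i.
Proof. by move=> /flattenP [s /mapP [a _ ->] /mapP [i _ ->]]; exists a, i. Qed.

Lemma places_of_uniq ms h : uniq (places_of ms h).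
Proof.
apply: allpairs_uniq_dep; first exact: undup_uniq.
  by move=> a _; exact: iota_uniq.
by move=> [a i] [b j] _ _ /= /mkP_inj [-> -> _].
Qed.

Lemma pmap_places_of ms h : perm_eq (pmap fS (places_of ms h)) ms.
Proof.
have pmap_iota a k n : pmap fS [seq mkP a h i | i <- iota k n] = nseq n a.
  by elim: n k => [|n IH] k //=; rewrite IH.
have -> : forall s,
    pmap fS (flatten [seq [seq mkP a h i | i <- iota 1 (count_mem a ms)] | a <- s])
    = flatten [seq nseq (count_mem a ms) a | a <- s].
  by elim=> [|a s IH] //=; rewrite pmap_cat IH pmap_iota.
exact: perm_count_undup.
Qed.

Lemma mem_upost x y : x \in upost y ->
  (exists t H, y = mkT t H) /\ exists a i, x = mkP a (Some y) i.
Proof.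
rewrite /upost; case E: (decT y) => [[t H]|] //= xy.
by split; [exists t, H; exact: decT_someK | exact: mem_places_of xy].
Qed.

Lemma upost_uniq x : uniq (upost x).
Proof. by rewrite /upost; case: (decT x) => [[t H]|] //; exact: places_of_uniq. Qed.

Lemma mem_upost_inj x y p : p \in upost x -> p \in upost y -> x = y.
Proof. by move=> /mem_upost [_ [a [i ->]]] /mem_upost [_ [b [j /mkP_inj []]]]. Qed.

Lemma mem_m0 p : p \in m0 -> exists a i, p = mkP a None i.
Proof. exact: mem_places_of. Qed.

Lemma m0_upost p y : p \in m0 -> p \in upost y -> False.
Proof.
by move=> /mem_m0 [a [i ->]] /mem_upost [[t [H ->]] [b [j /mkP_inj []]]].
Qed.

Lemma utransP x : utrans x ->
  exists t H, x = mkT t H /\ perm_eq (pre N t) (pmap fS H).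
Proof. by case=> t H _ _ _ h; exists t, H. Qed.

Lemma pmap_upost t H : perm_eq (pmap fS (upost (mkT t H))) (post N t).
Proof. exact: pmap_places_of. Qed.

Definition ufire (M1 M2 : seq code) := exists x, utrans x /\ exists r,
  perm_eq M1 (upre x ++ r) /\ perm_eq M2 (upost x ++ r).

Definition ubfire (M1 M2 : seq code) := exists x, utrans x /\ exists r,
  perm_eq M1 (upost x ++ r) /\ perm_eq M2 (upre x ++ r).

Inductive freach : seq code -> Prop :=
| freach0 M : perm_eq M m0 -> freach M
| freachS M1 M2 : freach M1 -> ufire M1 M2 -> freach M2.

Lemma freach_fold M : freach M -> reach (fire N) m (pmap fS M).
Proof.
elim=> {M} [M hM | M1 M2 _ [m1 [fire_m1 p1]] [y [uy [r [f1 f2]]]]].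
  exists m; split; first exact: rt_refl.
  by rewrite perm_sym (permPl (perm_pmap fS hM)); exact: pmap_places_of.
case/utransP: uy f1 f2 => t [H [-> preH]] f1 f2.
exists (pmap fS M2); split => //.
apply: (rt_trans _ _ _ m1) => //; apply: rt_step; exists t, (pmap fS r); split.
  by rewrite (permPl p1) (permPl (perm_pmap fS f1)) pmap_cat perm_sym (perm_catr _ preH).
by rewrite (permPl (perm_pmap fS f2)) pmap_cat (perm_catr _ (pmap_upost t H)).
Qed.

Section Backward.
Hypothesis post_neq0 : forall t : T, post N t != [::].

Lemma upost_neq0 x : utrans x -> exists p, p \in upost x.
Proof.
move=> /utransP [t [H [-> _]]]; have := pmap_upost t H.
case: (upost _) => [|p l]; last by exists p; rewrite inE eqxx.
by rewrite /= perm_sym => /perm_nilP post0; move: (post_neq0 t); rewrite post0.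
Qed.

Lemma freach_perm M M' : perm_eq M M' -> freach M -> freach M'.
Proof.
move=> hM fM; case: fM hM => [M0 h0 | M1 M0 h1 [x [ux [r [e1 e2]]]]] hM.
  by apply: freach0; rewrite -(permPl hM).
by apply: (freachS h1); exists x; split => //; exists r; rewrite -(permPl hM).
Qed.

Lemma freach_ubfire M M' : freach M -> ubfire M M' -> freach M'.
Proof.
move=> hM; elim: hM M' => {M} [M hM | M1 M hM1 IH [y [uy [r [f1 f2]]]]] M'
  [x [ux [r' [e1 e2]]]].
  have [p px] := upost_neq0 ux.
  have : p \in m0 by rewrite -(perm_mem hM) (perm_mem e1) mem_cat px.
  by move/m0_upost/(_ px).
have h : perm_eq (upost x ++ r') (upost y ++ r) by rewrite -(permPl e1).
have [eq_xy | neq_xy] := eqVneq x y.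
  rewrite -eq_xy perm_cat2l in h; apply: freach_perm hM1.
  by rewrite (permPl f1) perm_sym (permPl e2) -eq_xy perm_cat2l.
have [e [r'E rE]] : exists e, perm_eq r' (upost y ++ e) /\ perm_eq r (upost x ++ e).
  apply: perm_cat_disjoint h => p px py.
  by move/eqP: neq_xy; apply; exact: mem_upost_inj px py.
have hx : freach (upre x ++ (upre y ++ e)).
  apply: IH; exists x; split => //; exists (upre y ++ e); split => //.
  by rewrite (permPl f1) (perm_catl _ rE) perm_catCA.
apply: (freachS hx); exists y; split => //; exists (upre x ++ e); split.
  by rewrite perm_catCA.
by rewrite (permPl e2) (perm_catl _ r'E) perm_catCA.
Qed.

Lemma rev_reach_freach M : clos_refl_trans _ rev_fire m0 M -> freach M.
Proof.
move/clos_rt_rtn1_iff; elim => [|M1 M2 [x [ux [r [[e1 e2]|[e1 e2]]]]] _ hM1].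
- exact/freach0/perm_refl.
- by apply: (freachS hM1); exists x; split => //; exists r.
- by apply: (freach_ubfire hM1); exists x; split => //; exists r.
Qed.
End Backward.

Lemma perm_choose (A : choiceType) (H : seq A) :
  perm_eq (choose [pred l | perm_eq l H] H) H.
Proof. by apply: (chooseP (P := [pred l | perm_eq l H])); exact: perm_refl. Qed.

Lemma canonical_choose (H : seq code) :
  uniq H -> canonical (choose [pred l | perm_eq l H] H).
Proof.
move=> uH; set Hc := choose _ H; have HcH : perm_eq Hc H := perm_choose H.
split; first by rewrite (perm_uniq HcH).
rewrite (@eq_choose _ [pred l | perm_eq l Hc] [pred l | perm_eq l H]).
  by apply: choose_id; rewrite /= ?perm_refl.
by move=> l /=; exact: (permPr HcH).
Qed.

Section Forward.
Hypothesis pre_neq0 : forall t : T, pre N t != [::].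

Lemma upre_neq0 x : utrans x -> exists p, p \in upre x.
Proof.
move=> /utransP [t [H [-> preH]]]; case: H preH => [|p H] /= preH.
  by move/perm_nilP: preH (pre_neq0 t) => ->.
by exists p; rewrite inE eqxx.
Qed.

Definition produced (C : seq code) p :=
  p \in m0 \/ exists2 w, w \in C & p \in upost w.

(** [M] is the cut of the configuration [C]: the marking reached from [m0] by
    firing the transitions of [C]. *)
Record config_cut (C M : seq code) : Prop := {
  conf_utrans : forall x, x \in C -> utrans x;
  cut_uniq : uniq M;
  cut_produced : forall p, p \in M -> produced C p;
  cut_unconsumed : forall p w, p \in M -> w \in C -> p \in upre w -> False;
  conf_pre_produced : forall w p, w \in C -> p \in upre w -> produced C p;
  conf_conflict_free : forall w1 w2 p, w1 \in C -> w2 \in C -> w1 <> w2 ->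
    p \in upre w1 -> p \in upre w2 -> False }.

Lemma config_cut0 : config_cut [::] m0.
Proof. by split=> //; [exact: places_of_uniq | move=> p; left]. Qed.

Section Cut.
Variables C M : seq code.
Hypothesis cutCM : config_cut C M.

Definition in_past x := x \in C \/ produced C x.

Lemma in_past_prec x y : uprec N y x -> in_past x -> in_past y.
Proof.
move=> yx [xC | [xm | [w wC xw]]].
- case: yx => [yx | xy]; first by right; exact (conf_pre_produced cutCM xC yx).
  case: (mem_upost xy) => _ [a [i Ex]].
  by case: (utransP (conf_utrans cutCM xC)) => t [H []]; rewrite Ex.
- case: yx => [yx | xy]; last by case: (m0_upost xm xy).
  by case: (mem_m0 xm) yx => a [i ->].
- case: yx => [yx | xy]; first by case: (mem_upost xw) yx => _ [a [i ->]].
  by left; rewrite -(mem_upost_inj xw xy).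
Qed.

Lemma in_past_caus x y : ucaus N y x -> in_past x -> in_past y.
Proof. by elim=> [a b /in_past_prec | | a b c _ IH1 _ IH2] // /IH2/IH1. Qed.

Lemma in_past_trans t : is_trans_code t -> in_past t -> t \in C.
Proof.
rewrite /is_trans_code => tt [// | [tm | [w _ tw]]].
  by case: (mem_m0 tm) tt => a [i ->].
by case: (mem_upost tw) tt => _ [a [i ->]].
Qed.

Lemma cut_uplace p : p \in M -> uplace N m p.
Proof.
move=> /(cut_produced cutCM) [pm | [w wC pw]]; first exact: uplace_init.
exact: uplace_post (conf_utrans cutCM wC) pw.
Qed.

Lemma cut_in_past p : p \in M -> in_past p.
Proof. by move=> /(cut_produced cutCM); right. Qed.

Lemma cut_not_trans p : p \in M -> decT p = None.
Proof.
move=> /(cut_produced cutCM) [pm | [w _ pw]]; first by case: (mem_m0 pm) => a [i ->].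
by case: (mem_upost pw) => _ [a [i ->]].
Qed.

Lemma cut_not_caus x y : x \in M -> y \in M -> x <> y -> ~ ucaus N x y.
Proof.
move=> xM yM neq_xy /clos_rt_rt1n_iff h; move: yM neq_xy.
case: h => [// | z w xz zw yM _].
have zpast : in_past z.
  by apply: in_past_caus (cut_in_past yM); exact/clos_rt_rt1n_iff.
case: xz => [xz | zx]; last by move: zx; rewrite /upost (cut_not_trans xM).
have tz : is_trans_code z.
  by move: xz; rewrite /upre /is_trans_code; case: (decT z) => [[]|].
exact (cut_unconsumed cutCM xM (in_past_trans tz zpast) xz).
Qed.

Lemma cut_co x y : x \in M -> y \in M -> x <> y -> uco N x y.
Proof.
move=> xM yM neq_xy; split=> //; split; first exact: cut_not_caus.
split; first by apply: cut_not_caus => // eq_yx; apply: neq_xy.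
move=> [t1 [t2 [tt1 [tt2 [c1 [c2 [neq_t [p [p1 p2]]]]]]]]].
have t1C := in_past_trans tt1 (in_past_caus c1 (cut_in_past xM)).
have t2C := in_past_trans tt2 (in_past_caus c2 (cut_in_past yM)).
exact: (conf_conflict_free cutCM t1C t2C neq_t p1 p2).
Qed.

Lemma cut_CO H : {subset H <= M} -> CO N H.
Proof.
move=> HM; split=> [x y xH yH | ]; first exact: cut_co (HM _ xH) (HM _ yH).
exists C => t x xH tt c.
exact: in_past_trans tt (in_past_caus c (cut_in_past (HM _ xH))).
Qed.

Lemma utrans_of_cut t H : canonical H -> {subset H <= M} ->
  perm_eq (pre N t) (pmap fS H) -> utrans (mkT t H).
Proof.
move=> canH HM preH; apply: utrans_intro => //; last exact: cut_CO.
by move=> p /HM /cut_uplace.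
Qed.

Lemma config_cut_ufire x R : utrans x -> perm_eq M (upre x ++ R) ->
  config_cut (x :: C) (upost x ++ R).
Proof.
move=> ux MxR; have := cut_uniq cutCM; rewrite (perm_uniq MxR) cat_uniq.
case/and3P=> _ /hasPn disj_xR uR.
have xM p : p \in upre x -> p \in M by rewrite (perm_mem MxR) mem_cat => ->.
have RM p : p \in R -> p \in M by rewrite (perm_mem MxR) mem_cat orbC => ->.
have xC : x \notin C.
  apply/negP => xC; have [p px] := upre_neq0 ux.
  exact: (cut_unconsumed cutCM (xM p px) xC px).
have new_post p : p \in upost x -> produced C p -> False.
  move=> px [pm | [w wC pw]]; first exact: m0_upost pm px.
  by move: xC; rewrite (mem_upost_inj px pw) wC.
have producedS p : produced C p -> produced (x :: C) p.
  by case=> [pm | [w wC pw]]; [left | right; exists w; rewrite ?inE ?wC ?orbT].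
split.
- by move=> y; rewrite inE => /orP [/eqP -> | /(conf_utrans cutCM)].
- rewrite cat_uniq upost_uniq uR andbT /=; apply/hasP => -[p pR px].
  exact: new_post px (cut_produced cutCM (RM p pR)).
- move=> p; rewrite mem_cat => /orP [px | /RM /(cut_produced cutCM) /producedS //].
  by right; exists x; rewrite ?inE ?eqxx.
- move=> p w; rewrite mem_cat inE => /orP [px | pR] /orP [/eqP -> | wC] pw.
  + exact: new_post px (cut_produced cutCM (xM p pw)).
  + exact: new_post px (conf_pre_produced cutCM wC pw).
  + by move: (disj_xR p pR); rewrite pw.
  + exact: (cut_unconsumed cutCM (RM p pR) wC pw).
- move=> w p; rewrite inE => /orP [/eqP -> /xM /(cut_produced cutCM) | wC pw].
    exact: producedS.
  exact/producedS/(conf_pre_produced cutCM wC pw).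
- move=> w1 w2 p; rewrite !inE => /orP [/eqP -> | w1C] /orP [/eqP -> | w2C] neq_w p1 p2 //.
  + exact: (cut_unconsumed cutCM (xM p p1) w2C p2).
  + exact: (cut_unconsumed cutCM (xM p p2) w1C p1).
  + exact: (conf_conflict_free cutCM w1C w2C neq_w p1 p2).
Qed.

Lemma config_cut_fire t m3 : perm_eq (pmap fS M) (pre N t ++ m3) ->
  exists x M', [/\ config_cut (x :: C) M', rev_fire M M' &
                 perm_eq (pmap fS M') (post N t ++ m3)].
Proof.
case/perm_pmap_cat_split => H [R [MHR [preH pmapR]]].
set Hc := choose [pred l | perm_eq l H] H; have HcH : perm_eq Hc H := perm_choose H.
have MHcR : perm_eq M (Hc ++ R) by rewrite (permPl MHR) perm_sym (perm_catr _ HcH).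
have canHc : canonical Hc.
  apply: canonical_choose; move: (cut_uniq cutCM).
  by rewrite (perm_uniq MHR) cat_uniq => /andP [].
have HcM : {subset Hc <= M} by move=> p pHc; rewrite (perm_mem MHcR) mem_cat pHc.
have ux : utrans (mkT t Hc).
  by apply: utrans_of_cut => //; rewrite perm_sym (permPl (perm_pmap fS HcH)).
exists (mkT t Hc), (upost (mkT t Hc) ++ R); split.
- exact: config_cut_ufire.
- by exists (mkT t Hc); split => //; exists R; left.
- by rewrite pmap_cat (perm_catr _ (pmap_upost t Hc)) perm_cat2l.
Qed.

End Cut.

Lemma fire_lift m1 : clos_refl_trans _ (fire N) m m1 ->
  exists C M, [/\ config_cut C M, clos_refl_trans _ rev_fire m0 M &
                 perm_eq (pmap fS M) m1].
Proof.
move/clos_rt_rtn1_iff; elim=> [|m2 m3 [t [r [e1 e2]]] _ [C [M [cutCM revM mM]]]].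
  by exists [::], m0; split; [exact: config_cut0 | exact: rt_refl | exact: pmap_places_of].
have [x [M' [cut' st' mM']]] := config_cut_fire cutCM (perm_trans mM e1).
exists (x :: C), M'; split => //; first exact: rt_trans revM (rt_step _ _ _ _ st').
by rewrite (permPl mM') perm_sym.
Qed.

End Forward.
End Unfolding.

Theorem mainTheorem13 (S T : choiceType) (N : ptnet S T) (m : seq S)
    (Hpre : forall t : T, pre N t != [::])
    (Hpost : forall t : T, post N t != [::])
    (m' : seq S) :
  reach (fire N) m m' <->
  exists m'' : seq (code S T),
    (forall p, p \in m'' -> uplace N m p) /\
    reach (rev_fire N m) (m0 T m) m'' /\
    perm_eq m' (pmap (@fS S T) m'').
Proof.
split=> [[m1 [fire_m1 m1m']] | [m'' [_ [[M [revM MM'']] m'M'']]]].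
  have [C [M [cutCM revM mM]]] := fire_lift Hpre fire_m1.
  exists M; split; first exact: cut_uplace cutCM.
  split; first by exists M; split.
  by rewrite perm_sym (permPl mM).
have [m1 [fire_m1 m1M]] := freach_fold (rev_reach_freach Hpost revM).
exists m1; split => //.
by rewrite (permPl m1M) perm_sym (permPl m'M'') perm_sym perm_pmap.
Qed.
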